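(* For all real $\alpha,\beta$, every non-negative integer $r$ and all integers $0\le k\le n$, \[ S_{r\alpha,\beta}(n,k)=B^{(r)}_{n+r,k+r}\big(\langle-\beta\rangle_j;\langle-\alpha\rangle_{j-1}\big), \] i.e. the partial $r$-Bell polynomial evaluated at $a_j=\langle-\beta\rangle_j$, $b_j=\langle-\alpha\rangle_{j-1}$ ($j\ge1$). Consequently, when $\beta\neq0$, $P_n^{(r\alpha,\beta)}(x)=\sum_{k=0}^{n}B^{(r)}_{n+r,k+r}\big(\langle-\beta\rangle_j;\langle-\alpha\rangle_{j-1}\big)x^k$.
   Context: For real $a$ and integer $n\ge 1$, $\langle a\rangle_n:=a(a+1)\cdots(a+n-1)$ and $\langle a\rangle_0:=1$. For real $\alpha,\beta$ and integers $0\le k\le n$, $S_{\alpha,\beta}(n,k):=\frac{1}{k!}\sum_{j=0}^{k}(-1)^{k-j}\binom{k}{j}\langle-\alpha-\beta j\rangle_n$. For real $\alpha,\beta$ with $\beta\neq0$, $P_n^{(\alpha,\beta)}(x)$ are defined by $\sum_{n\ge0}P_n^{(\alpha,\beta)}(x)\frac{t^n}{n!}=(1-t)^{\alpha}\exp\big(x((1-t)^{\beta}-1)\big)$. For sequences $(a_j)_{j\ge1},(b_j)_{j\ge1}$ and integers $r,k\ge0$, the partial $r$-Bell polynomials $B^{(r)}_{n+r,k+r}(a_j;b_j)$, $n\ge k$, are defined by $\sum_{n\ge k}B^{(r)}_{n+r,k+r}(a_j;b_j)\frac{t^n}{n!}=\frac{1}{k!}\Big(\sum_{j\ge1}a_j\frac{t^j}{j!}\Big)^k\Big(\sum_{j\ge0}b_{j+1}\frac{t^j}{j!}\Big)^r$.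 *)

From HB Require Import structures.
From mathcomp Require Import all_boot all_order all_algebra.
Set Implicit Arguments. Unset Strict Implicit. Unset Printing Implicit Defensive.
Import Order.TTheory GRing.Theory Num.Theory.
Local Open Scope ring_scope.

Section Defs.
Variable R : realFieldType.

Definition rising (a : R) (n : nat) : R := \prod_(i < n) (a + i%:R).

Definition Sab (al be : R) (n k : nat) : R :=
  (k`!%:R)^-1 * \sum_(j < k.+1)
     ((-1) ^+ (k - j) * 'C(k, j)%:R * rising (- al - be * j%:R) n).

(* formal power series in t, given by their coefficient sequences *)
Definition fps := nat -> R.
Definition fps_one : fps := fun n => (n == 0%N)%:R.
Definition fps_mul (f g : fps) : fps :=
  fun n => \sum_(i < n.+1) f i * g (n - i)%N.
Definition fps_pow (f : fps) (m : nat) : fps := iter m (fps_mul f) fps_one.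

(* partial r-Bell polynomial B^{(r)}_{n+r,k+r}(a_j; b_j):
   n! times the t^n-coefficient of
   (1/k!) (sum_{j>=1} a_j t^j/j!)^k (sum_{j>=0} b_{j+1} t^j/j!)^r *)
Definition egf_a (a : nat -> R) : fps :=
  fun j => if j is 0 then 0 else a j / (j`!)%:R.
Definition egf_b (b : nat -> R) : fps := fun j => b j.+1 / (j`!)%:R.
Definition rBell (r : nat) (a b : nat -> R) (n k : nat) : R :=
  (n`!)%:R * ((k`!%:R)^-1 *
     fps_mul (fps_pow (egf_a a) k) (fps_pow (egf_b b) r) n).

(* binomial series (1 - t)^al = sum_n (-1)^n binom(al, n) t^n,
   binom(al, n) = al(al-1)...(al-n+1)/n! *)
Definition binom_ser (al : R) : fps :=
  fun n => (-1) ^+ n * ((\prod_(i < n) (al - i%:R)) / (n`!)%:R).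

(* exp(x g(t)) for a series g with g_0 = 0:  sum_m x^m g^m / m!
   (the t^n coefficient only involves m <= n since g^m = O(t^m)) *)
Definition exp_comp (x : R) (g : fps) : fps :=
  fun n => \sum_(m < n.+1) (x ^+ m / (m`!)%:R * fps_pow g m n).

(* P_n^{(al,be)}(x) : n! times the t^n coefficient of
   (1-t)^al exp(x((1-t)^be - 1)) *)
Definition Pab (al be x : R) (n : nat) : R :=
  (n`!)%:R * fps_mul (binom_ser al)
     (exp_comp x (fun j => binom_ser be j - fps_one j)) n.

End Defs.

(* Writing c_a for the binomial series (1 - t)^a, its coefficients are
   <-a>_n / n!, so both generating functions defining the r-Bell polynomial are
   binomial series: the b-series is c_al and the a-series is c_be - 1.
   Vandermonde's identity c_a c_b = c_(a+b) gives c_al^r = c_(r al), and the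
   binomial theorem expands (c_be - 1)^k = sum_j (-1)^(k-j) C(k,j) c_(j be).
   Hence the t^n coefficient of c_(r al) (c_be - 1)^k / k! is
   sum_j (-1)^(k-j) C(k,j) <-r al - j be>_n / (n! k!), which is S_(r al,be)(n,k) / n!.
   For P_n, expand exp(x (c_be - 1)) termwise and collect the powers of x. *)
From HB Require Import structures.
From mathcomp Require Import all_boot all_order all_algebra.
From mathcomp Require Import ring zify.
Set Implicit Arguments. Unset Strict Implicit. Unset Printing Implicit Defensive.
Import Order.TTheory GRing.Theory Num.Theory.
Local Open Scope ring_scope.

Section FormalPowerSeries.
Variable R : realFieldType.
Implicit Types (f g h : fps R) (n k m : nat).

Lemma fps_mulC f g n : fps_mul f g n = fps_mul g f n.
Proof.
rewrite /fps_mul (reindex_inj rev_ord_inj) /=; apply: eq_bigr => i _ /=.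
by rewrite subSS subKn ?leq_ord // mulrC.
Qed.

Lemma eq_fps_mulr f g h : g =1 h -> fps_mul f g =1 fps_mul f h.
Proof. by move=> eq_gh n; apply: eq_bigr => i _; rewrite eq_gh. Qed.

Lemma eq_fps_pow f g k : f =1 g -> fps_pow f k =1 fps_pow g k.
Proof.
move=> eq_fg; elim: k => [|k IH] n //=.
by rewrite (eq_fps_mulr _ IH); apply: eq_bigr => i _; rewrite eq_fg.
Qed.

Lemma fps_mul_sumr f K (w : nat -> R) (g : nat -> fps R) n :
  fps_mul f (fun m => \sum_(j < K) w j * g j m) n
  = \sum_(j < K) w j * fps_mul f (g j) n.
Proof.
rewrite /fps_mul; under eq_bigr => i _ do rewrite mulr_sumr.
rewrite exchange_big /=; apply: eq_bigr => j _.
by rewrite mulr_sumr; apply: eq_bigr => i _; ring.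
Qed.

Lemma fps_mul_subl_one f g n :
  fps_mul (fun j => f j - fps_one R j) g n = fps_mul f g n - g n.
Proof.
rewrite /fps_mul (eq_bigr _ (fun i _ => mulrBl _ _ _)) sumrB; congr (_ - _).
rewrite big_ord_recl big1 => [|i _]; last by rewrite mul0r.
by rewrite subn0 mul1r addr0.
Qed.

Lemma fps_pow_coef_small f m n : f 0%N = 0 -> (n < m)%N -> fps_pow f m n = 0.
Proof.
move=> f0; elim: m n => [|m IH] n //= lt_nm.
rewrite /fps_mul big_ord_recl f0 mul0r add0r big1 // => i _.
by rewrite IH ?mulr0 //; have := ltn_ord i; rewrite /= /bump /=; lia.
Qed.

Definition alt_binom k j : R := (-1) ^+ (k - j) * 'C(k, j)%:R.

Lemma sum_alt_binom_diff k (e : nat -> R) :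
  \sum_(j < k.+1) alt_binom k j * (e j.+1 - e j)
  = \sum_(j < k.+2) alt_binom k.+1 j * e j.
Proof.
under eq_bigr => j _ do rewrite mulrBr.
rewrite sumrB [RHS]big_ord_recl /=.
under [X in _ = _ + X]eq_bigr => j _ do
  rewrite /alt_binom /bump /= add1n binS natrD subSS mulrDr mulrDl.
rewrite big_split /= [X in _ = _ + (X + _)]big_ord_recr /=.
rewrite bin_small // mulr0 mul0r addr0.
rewrite [X in _ - X = _]big_ord_recl /= /alt_binom /bump /= !bin0 !subn0.
have -> : \sum_(i < k) (-1) ^+ (k - i) * 'C(k, i.+1)%:R * e i.+1 =
  - \sum_(i < k) (-1) ^+ (k - (1 + i)) * 'C(k, 1 + i)%:R * e (1 + i)%N.
  rewrite -sumrN; apply: eq_bigr => i _.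
  by rewrite add1n -(subnSK (ltn_ord i)) exprS; ring.
by rewrite exprS; ring.
Qed.

Lemma fps_pow_subl_one f k n :
  fps_pow (fun j => f j - fps_one R j) k n
  = \sum_(j < k.+1) alt_binom k j * fps_pow f j n.
Proof.
elim: k n => [|k IH] n; first by rewrite big_ord1 /alt_binom bin0 subnn expr0 !mul1r.
rewrite /= (eq_fps_mulr _ IH) fps_mul_sumr.
rewrite -(sum_alt_binom_diff k (fun j => fps_pow f j n)).
by apply: eq_bigr => j _; rewrite fps_mul_subl_one.
Qed.

End FormalPowerSeries.

Section BinomialSeries.
Variable R : realFieldType.
Implicit Types (a b : R) (n : nat).
Local Notation c := (@binom_ser R).

Lemma natr_fact_neq0 n : (n`!)%:R != 0 :> R.
Proof. by rewrite pnatr_eq0 -lt0n fact_gt0. Qed.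

Lemma binom_ser0 a : c a 0 = 1.
Proof. by rewrite /binom_ser big_ord0 expr0 mul1r divr1. Qed.

Lemma binom_serS a n : n.+1%:R * c a n.+1 = (n%:R - a) * c a n.
Proof.
rewrite /binom_ser big_ord_recr /= factS natrM exprS.
by field; rewrite natr_fact_neq0 nat1r pnatr_eq0.
Qed.

(* c_a is the unique series with constant term 1 solving (1 - t) f' = -a f. *)
Lemma binom_ser_uniq a (d : fps R) : d 0%N = 1 ->
  (forall n, n.+1%:R * d n.+1 = (n%:R - a) * d n) -> d =1 c a.
Proof.
move=> d0 dS; elim=> [|n IH]; first by rewrite d0 binom_ser0.
have nz : n.+1%:R != 0 :> R by rewrite pnatr_eq0.
by apply: (mulfI nz); rewrite dS binom_serS IH.
Qed.

Lemma binom_serE a n : c a n = rising (- a) n / (n`!)%:R.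
Proof.
rewrite /binom_ser /rising mulrA; congr (_ / _).
elim: n => [|n IH]; first by rewrite !big_ord0 expr0 mul1r.
by rewrite !big_ord_recr /= exprS -IH; ring.
Qed.

Lemma fps_one_binom_ser0 : fps_one R =1 c 0.
Proof.
apply: binom_ser_uniq => // n.
by rewrite /fps_one subr0 mulr0; case: n => [|n]; rewrite ?mul0r ?mulr0.
Qed.

Lemma binom_serD a b : fps_mul (c a) (c b) =1 c (a + b).
Proof.
apply: binom_ser_uniq => [|n].
  by rewrite /fps_mul big_ord1 !binom_ser0 mulr1.
have splitS (i : 'I_n.+2) : n.+1%:R * (c a i * c b (n.+1 - i)%N) =
    (i%:R * c a i) * c b (n.+1 - i)%N
    + c a i * ((n.+1 - i)%N%:R * c b (n.+1 - i)%N).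
  have le_in : (i <= n.+1)%N by rewrite -ltnS.
  by rewrite -{1}(subnKC le_in) natrD; ring.
rewrite /fps_mul mulr_sumr (eq_bigr _ (fun i _ => splitS i)) big_split /=.
rewrite [X in X + _]big_ord_recl [X in _ + X]big_ord_recr /=.
rewrite subnn !mul0r mulr0 add0r addr0 mulr_sumr -big_split /=.
apply: eq_bigr => i _; rewrite /bump /= add1n subSS binom_serS.
have le_in : (i <= n)%N by rewrite -ltnS.
rewrite (subSn le_in) binom_serS.
have -> : n%:R = i%:R + (n - i)%N%:R :> R by rewrite -natrD subnKC.
ring.
Qed.

Lemma fps_pow_binom_ser a r : fps_pow (c a) r =1 c (r%:R * a).
Proof.
elim: r => [|r IH] n; first by rewrite mul0r -fps_one_binom_ser0.
rewrite /= (eq_fps_mulr _ IH) binom_serD.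
by rewrite -add1n natrD mulrDl mul1r.
Qed.

Lemma egf_a_rising b : egf_a (rising (- b)) =1 (fun j => c b j - fps_one R j).
Proof.
case=> [|j]; first by rewrite /egf_a binom_ser0 subrr.
by rewrite /egf_a binom_serE subr0.
Qed.

Lemma egf_b_rising a : egf_b (fun j => rising (- a) j.-1) =1 c a.
Proof. by move=> j; rewrite /egf_b binom_serE. Qed.

Lemma rBell_rising a b r n k :
  rBell r (rising (- b)) (fun j => rising (- a) j.-1) n k
  = (n`!)%:R * ((k`!%:R)^-1 *
      fps_mul (c (r%:R * a)) (fps_pow (fun j => c b j - fps_one R j) k) n).
Proof.
rewrite /rBell fps_mulC; congr (_ * (_ * _)); apply: eq_bigr => i _.
rewrite (eq_fps_pow _ (egf_a_rising b)); congr (_ * _).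
by rewrite (eq_fps_pow _ (egf_b_rising a)) fps_pow_binom_ser.
Qed.

Lemma Sab_rBell a b r n k :
  Sab (r%:R * a) b n k = rBell r (rising (- b)) (fun j => rising (- a) j.-1) n k.
Proof.
rewrite rBell_rising (eq_fps_mulr _ (@fps_pow_subl_one _ (c b) k)).
rewrite (fps_mul_sumr _ _ (@alt_binom R k) (fun j => fps_pow (c b) j)).
rewrite /Sab mulrCA !mulr_sumr; apply: eq_bigr => j _.
rewrite (eq_fps_mulr _ (fps_pow_binom_ser b j)) binom_serD binom_serE.
have -> : - (r%:R * a + j%:R * b) = - (r%:R * a) - b * j%:R by ring.
by rewrite /alt_binom; field; rewrite !natr_fact_neq0.
Qed.

Lemma Pab_rBell a b r n x :
  Pab (r%:R * a) b x n = \sum_(k < n.+1)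
    rBell r (rising (- b)) (fun j => rising (- a) j.-1) n k * x ^+ k.
Proof.
pose g := fun j => c b j - fps_one R j.
have g0 : g 0%N = 0 by rewrite /g binom_ser0 subrr.
have exp_comp_trunc p : (p <= n)%N ->
    exp_comp x g p = \sum_(m < n.+1) x ^+ m / (m`!)%:R * fps_pow g m p.
  rewrite -ltnS => le_pn; rewrite /exp_comp.
  rewrite (big_ord_widen n.+1 (fun m => x ^+ m / (m`!)%:R * fps_pow g m p) le_pn).
  rewrite big_mkcond /=.
  apply: eq_bigr => m _; case: ifP => // /negbT; rewrite -leqNgt => lt_pm.
  by rewrite fps_pow_coef_small ?mulr0.
have -> : Pab (r%:R * a) b x n = (n`!)%:R * fps_mul (c (r%:R * a))
    (fun p => \sum_(m < n.+1) x ^+ m / (m`!)%:R * fps_pow g m p) n.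
  congr (_ * _); apply: eq_bigr => i _.
  by rewrite exp_comp_trunc ?leq_subr.
rewrite (fps_mul_sumr _ _ (fun m => x ^+ m / (m`!)%:R) (fps_pow g)).
rewrite mulr_sumr; apply: eq_bigr => k _.
by rewrite rBell_rising; ring.
Qed.

End BinomialSeries.

Theorem proposition4 (R : realFieldType) (al be : R) (r n : nat) :
  (forall k : nat, (k <= n)%N ->
     Sab (r%:R * al) be n k
     = rBell r (fun j => rising (- be) j) (fun j => rising (- al) j.-1) n k)
  /\
  (be != 0 -> forall x : R,
     Pab (r%:R * al) be x n
     = \sum_(k < n.+1)
         rBell r (fun j => rising (- be) j) (fun j => rising (- al) j.-1) n k
         * x ^+ k).
Proof.
(* Both identities hold for every k and every be. *)
split=> [k _ | _ x]; [exact: Sab_rBell | exact: Pab_rBell].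
Qed.
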